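(* Let $\ell \to r~[\phi]$ be a constrained rewrite rule. Let $p_1,\ldots,p_n$ be the positions such that $\{p_1,\ldots,p_n\} = \{ p \in \mathcal{P}os(\ell) \mid \ell|_p \in \mathrm{Val} \cup \mathcal{V}ar(\phi) \}$, and let $x_1,\ldots,x_n$ be pairwise distinct variables with $\{x_1,\ldots,x_n\} \cap \mathcal{V}ar(\ell,r,\phi) = \emptyset$. Let $\ell' \to r~[\phi']$ be the constrained rule with $\ell' = \ell[x_1,\ldots,x_n]_{p_1,\ldots,p_n}$ (i.e., $\ell|_{p_i}$ replaced by $x_i$ for each $i$) and $\phi' = \phi \land \bigwedge_{i=1}^n (x_i = \ell|_{p_i}) \land \bigwedge_{y \in \mathcal{V}ar(r)\setminus\mathcal{V}ar(\ell,\phi)} (y = y)$. Then ${\to_{\ell \to r~[\phi]}} = {\to_{\ell' \to r~[\phi']}}$.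
   Context: Logically constrained term rewriting (LCTRS) setting. Sorts $\mathcal{S} = \mathcal{S}_{\mathit{theory}} \uplus \mathcal{S}_{\mathit{term}}$; signature $\Sigma = \Sigma_{\mathit{theory}} \cup \Sigma_{\mathit{terms}}$, where every symbol of $\Sigma_{\mathit{theory}}$ has argument and result sorts in $\mathcal{S}_{\mathit{theory}}$. Each theory sort $\iota$ has a nonempty universe $\mathcal{I}(\iota)$, and an interpretation $\mathcal{J}$ assigns to each $f:\iota_1\times\cdots\times\iota_n\to\iota$ in $\Sigma_{\mathit{theory}}$ a function $\mathcal{I}(\iota_1)\times\cdots\times\mathcal{I}(\iota_n)\to\mathcal{I}(\iota)$. For each theory sort $\iota$ there is a set $\mathrm{Val}_\iota\subseteq\Sigma_{\mathit{theory}}$ of value constants on which $\mathcal{J}$ is a bijection onto $\mathcal{I}(\iota)$; $\mathrm{Val}=\bigcup_\iota \mathrm{Val}_\iota$, and $\Sigma_{\mathit{terms}}\cap\Sigma_{\mathit{theory}}\subseteq\mathrm{Val}$. The theory includes sort $\mathsf{bool}$ with values $\mathsf{true},\mathsf{false}$, the usual connectives and $=,\neq$ on each theory sort, interpreted as expected. Theory terms are elements of $T(\Sigma_{\mathit{theory}},\mathcal{V})$; constraints are theory terms of sort $\mathsf{bool}$; $[\![\cdot]\!]$ denotes evaluation of ground theory terms. A substitution $\gamma$ respects a constraint $\phi$ if $x\gamma\in\mathrm{Val}$ for all $x\in\mathcal{V}ar(\phi)$ and $[\![\phi\gamma]\!]=\mathsf{true}$. A constrained rewrite rule $\ell\to r~[\varphi]$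 consists of terms $\ell,r$ of the same sort and a constraint $\varphi$, where $\ell$ is neither a theory term nor a variable. Its logical variables are $\mathcal{LV}ar(\ell\to r~[\varphi]) = \mathcal{V}ar(\varphi)\cup(\mathcal{V}ar(r)\setminus\mathcal{V}ar(\ell))$; a substitution $\gamma$ respects the rule if $x\gamma\in\mathrm{Val}$ for every logical variable $x$ and $[\![\varphi\gamma]\!]=\mathsf{true}$. For a single rule $\rho = \ell\to r~[\varphi]$, $s \to_{\rho} t$ holds iff there are a position $p$ of $s$ and a substitution $\gamma$ respecting $\rho$ with $s|_p=\ell\gamma$ and $t=s[r\gamma]_p$. *)

From Stdlib Require Import List.
Import ListNotations.
Set Implicit Arguments.

(* The theory universes I(iota) are encoded as predicates [carrier iota] on a
   common carrier type [dom]. *)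
Record lctrs := {
  sort : Type;
  theory_sort : sort -> Prop;              (* S_theory; other sorts are S_term *)
  bool_sort : sort;
  bool_is_theory : theory_sort bool_sort;

  fsym : Type;
  arity : fsym -> list sort;
  res : fsym -> sort;
  theory_sym : fsym -> Prop;
  value : fsym -> Prop;
  theory_sym_sorts : forall f, theory_sym f ->
      theory_sort (res f) /\ Forall theory_sort (arity f);
  value_const : forall v, value v -> theory_sym v /\ arity v = [];

  var : Type;
  vsort : var -> sort;

  dom : Type;
  carrier : sort -> dom -> Prop;
  carrier_nonempty : forall i, theory_sort i -> exists d, carrier i d;
  interp : fsym -> list dom -> dom;        (* J (only meaningful on theory symbols) *)
  interp_sorted : forall f ds, theory_sym f ->
      Forall2 carrier (arity f) ds -> carrier (res f) (interp f ds);
  val_onto : forall i d, theory_sort i ->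
      (carrier i d <-> exists v, value v /\ res v = i /\ interp v [] = d);
  val_inj : forall v w, value v -> value w -> res v = res w ->
      interp v [] = interp w [] -> v = w;

  true_sym : fsym;
  false_sym : fsym;
  true_value : value true_sym /\ res true_sym = bool_sort;
  false_value : value false_sym /\ res false_sym = bool_sort;
  true_false : interp true_sym [] <> interp false_sym [];
  bool_values : forall v, value v -> res v = bool_sort -> v = true_sym \/ v = false_sym;

  and_sym : fsym;
  and_sig : theory_sym and_sym /\ arity and_sym = [bool_sort; bool_sort]
            /\ res and_sym = bool_sort;
  and_spec : forall a b, carrier bool_sort a -> carrier bool_sort b ->
      (interp and_sym [a; b] = interp true_sym [] <->
       a = interp true_sym [] /\ b = interp true_sym []);

  eq_sym : sort -> fsym;
  eq_sig : forall i, theory_sort i ->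
      theory_sym (eq_sym i) /\ arity (eq_sym i) = [i; i] /\ res (eq_sym i) = bool_sort;
  eq_spec : forall i a b, theory_sort i -> carrier i a -> carrier i b ->
      (interp (eq_sym i) [a; b] = interp true_sym [] <-> a = b)
}.

Arguments theory_sort {l} _.
Arguments bool_sort {l}.
Arguments arity {l} _.
Arguments res {l} _.
Arguments theory_sym {l} _.
Arguments value {l} _.
Arguments vsort {l} _.
Arguments carrier {l} _ _.
Arguments interp {l} _ _.
Arguments true_sym {l}.
Arguments false_sym {l}.
Arguments and_sym {l}.
Arguments eq_sym {l} _.

Section Terms.
Variable L : lctrs.

Inductive term : Type :=
| Var : var L -> term
| App : fsym L -> list term -> term.

Definition sort_of (t : term) : sort L :=
  match t with Var x => vsort x | App f _ => res f end.

Fixpoint wf (t : term) : Prop :=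
  match t with
  | Var _ => True
  | App f args => map sort_of args = arity f /\
      (fix wfl (l : list term) : Prop :=
         match l with [] => True | a :: l' => wf a /\ wfl l' end) args
  end.

Fixpoint theory_term (t : term) : Prop :=
  match t with
  | Var x => theory_sort (vsort x)
  | App f args => theory_sym f /\
      (fix tl (l : list term) : Prop :=
         match l with [] => True | a :: l' => theory_term a /\ tl l' end) args
  end.

Fixpoint vars (t : term) : list (var L) :=
  match t with
  | Var x => [x]
  | App _ args => flat_map vars args
  end.

Definition is_value (t : term) : Prop :=
  exists v, value v /\ t = App v [].

Definition subst_ok (g : var L -> term) : Prop :=
  forall x, wf (g x) /\ sort_of (g x) = vsort x.

Fixpoint subst (g : var L -> term) (t : term) : term :=
  match t with
  | Var x => g x
  | App f args => App f (map (subst g) args)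
  end.

(* evaluation [[.]] (only meaningful on ground theory terms; variables are
   sent to an irrelevant default) *)
Fixpoint eval (t : term) : dom L :=
  match t with
  | Var _ => interp true_sym []
  | App f args => interp f (map eval args)
  end.

Definition position := list nat.

Fixpoint subt (t : term) (p : position) : option term :=
  match p with
  | [] => Some t
  | i :: p' =>
      match t with
      | Var _ => None
      | App f args =>
          match nth_error args i with
          | Some u => subt u p'
          | None => None
          end
      end
  end.

Definition is_pos (t : term) (p : position) : Prop := subt t p <> None.

Fixpoint replace (t : term) (p : position) (u : term) : term :=
  match p with
  | [] => u
  | i :: p' =>
      match t with
      | Var _ => t
      | App f args =>
          App f (firstn i args ++
                 match nth_error args i with
                 | Some a => [replace a p' u]
                 | None => []
                 end ++ skipn (S i) args)
      end
  end.

Definition replace_vars (t : term) (ps : list position) (xs : list (var L)) : term :=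
  fold_left (fun s px => replace s (fst px) (Var (snd px))) (combine ps xs) t.

Definition cTrue : term := App true_sym [].
Definition cAnd (a b : term) : term := App and_sym [a; b].
Definition cEq (i : sort L) (a b : term) : term := App (eq_sym i) [a; b].
Definition cBigAnd (cs : list term) : term := fold_right cAnd cTrue cs.

Record rule := mkRule { lhs : term; rhs : term; cstr : term }.

Definition valid_rule (rho : rule) : Prop :=
  wf (lhs rho) /\ wf (rhs rho) /\ sort_of (lhs rho) = sort_of (rhs rho) /\
  wf (cstr rho) /\ theory_term (cstr rho) /\ sort_of (cstr rho) = bool_sort /\
  (exists f args, lhs rho = App f args) /\ ~ theory_term (lhs rho).

Definition logical_var (rho : rule) (x : var L) : Prop :=
  In x (vars (cstr rho)) \/ (In x (vars (rhs rho)) /\ ~ In x (vars (lhs rho))).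

Definition respects (g : var L -> term) (rho : rule) : Prop :=
  (forall x, logical_var rho x -> is_value (g x)) /\
  eval (subst g (cstr rho)) = interp true_sym [].

Definition step (rho : rule) (s t : term) : Prop :=
  exists (p : position) (g : var L -> term),
    subst_ok g /\ respects g rho /\
    subt s p = Some (subst g (lhs rho)) /\
    t = replace s p (subst g (rhs rho)).

End Terms.

Arguments Var {L}.
Arguments App {L}.

(* The positions p_i carry leaves (values or variables of phi), pairwise
   incomparable, so abstracting them to the fresh x_i loses nothing: a
   substitution sending each x_i to its instance of l|_{p_i} maps l' to the same
   term as l.  The new conjuncts x_i = l|_{p_i} demand exactly this, and they can
   be evaluated because the variables of phi, hence all l|_{p_i}, are instantiated
   by values.  Conversely a matcher of l is extended to the x_i by these
   instances, which changes nothing on l, r and phi as the x_i are fresh.  The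
   conjuncts y = y are trivially true; they only make variables that are already
   logical occur in the constraint. *)

From Stdlib Require Import List Classical ClassicalEpsilon.
Import ListNotations.

Lemma nth_error_splice_eq {A} (xs : list A) i a b :
  nth_error xs i = Some a -> nth_error (firstn i xs ++ b :: skipn (S i) xs) i = Some b.
Proof.
  revert i; induction xs as [|c xs IH]; intros [|i] H; simpl in *; try discriminate; auto.
Qed.

Lemma nth_error_splice_neq {A} (xs : list A) i a b j :
  nth_error xs i = Some a -> j <> i ->
  nth_error (firstn i xs ++ b :: skipn (S i) xs) j = nth_error xs j.
Proof.
  revert i j; induction xs as [|c xs IH]; intros [|i] [|j] H Hji; simpl in *;
    try discriminate; try congruence; auto.
Qed.

Lemma exists_override {A B C} (g : B -> C) (F : A -> B -> C) (pxs : list (A * B)) :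
  NoDup (map snd pxs) ->
  exists g', (forall p x, In (p, x) pxs -> g' x = F p x) /\
             (forall z, ~ In z (map snd pxs) -> g' z = g z).
Proof.
  induction pxs as [|[p x] pxs IH]; intro Hnd.
  - exists g. split; [intros ? ? []|reflexivity].
  - inversion Hnd as [|? ? Hx Hnd']; subst.
    destruct (IH Hnd') as (g0 & Hin & Hout).
    exists (fun z => if excluded_middle_informative (z = x) then F p x else g0 z).
    split.
    + intros p' x' [Hpx|Hpx]; destruct (excluded_middle_informative (x' = x)) as [->|Hne].
      * now injection Hpx as -> .
      * now injection Hpx as _ ->.
      * exfalso. apply Hx. exact (in_map snd _ _ Hpx).
      * apply Hin, Hpx.
    + intros z Hz. destruct (excluded_middle_informative (z = x)) as [->|Hne].
      * exfalso. apply Hz. left. reflexivity.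
      * apply Hout. intro Hz'. apply Hz. right. exact Hz'.
Qed.

Lemma map_snd_combine {A B} (ps : list A) (xs : list B) :
  length xs = length ps -> map snd (combine ps xs) = xs.
Proof.
  revert xs; induction ps as [|p ps IH]; intros [|x xs] H; simpl in *;
    try discriminate; f_equal; auto.
Qed.

Section LCTRS.
Variable L : lctrs.
Notation term := (term L).
Notation T := (@interp L true_sym []).

Fixpoint term_nested_ind (P : term -> Prop) (HV : forall x, P (Var x))
  (HA : forall f args, Forall P args -> P (App f args)) (t : term) : P t :=
  match t with
  | Var x => HV x
  | App f args => HA f args
      ((fix F l := match l return Forall P l with
                   | [] => Forall_nil _
                   | a :: l' => Forall_cons _ (term_nested_ind P HV HA a) (F l')
                   end) args)
  end.

Definition leaf (t : term) : Prop :=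
  match t with Var _ => True | App _ args => args = [] end.

Lemma subt_leaf (t : term) i p : leaf t -> subt t (i :: p) = None.
Proof. destruct t as [x|f [|a args]]; simpl; try discriminate; destruct i; auto. Qed.

Lemma subst_ext (g h : var L -> term) (t : term) :
  (forall x, In x (vars t) -> g x = h x) -> subst g t = subst h t.
Proof.
  induction t as [x|f args IH] using term_nested_ind; intro Hgh; simpl in *.
  - apply Hgh; auto.
  - f_equal. apply map_ext_in. intros a Ha. rewrite Forall_forall in IH.
    apply IH; auto. intros x Hx; apply Hgh, in_flat_map; eauto.
Qed.

Lemma subt_subst g (t : term) p u :
  subt t p = Some u -> subt (subst g t) p = Some (subst g u).
Proof.
  revert t; induction p as [|i p IH]; intros [x|f args] H; simpl in *;
    try discriminate; try (injection H as <-; reflexivity).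
  rewrite nth_error_map. destruct (nth_error args i); simpl; [auto|discriminate].
Qed.

Lemma subst_replace g (t : term) p u v :
  subt t p = Some u -> subst g (replace t p v) = replace (subst g t) p (subst g v).
Proof.
  revert t; induction p as [|i p IH]; intros [x|f args] H; cbn [subt subst replace] in *;
    auto; try discriminate.
  rewrite nth_error_map. destruct (nth_error args i) as [a|] eqn:Ha; [|discriminate].
  cbn [option_map app]. rewrite map_app, firstn_map, skipn_map. cbn [map]. now rewrite (IH a H).
Qed.

Lemma replace_subt (t : term) p u : subt t p = Some u -> replace t p u = t.
Proof.
  revert t; induction p as [|i p IH]; intros [x|f args] H; simpl in *; try congruence.
  destruct (nth_error args i) as [a|] eqn:Ha; [|discriminate].
  simpl. rewrite (IH a H). f_equal. apply firstn_skipn_middle; exact Ha.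
Qed.

Lemma subt_replace_leaves q : forall (t : term) p a b v,
  subt t q = Some a -> leaf a -> subt t p = Some b -> leaf b -> p <> q ->
  subt (replace t q v) p = Some b.
Proof.
  induction q as [|i q IH]; intros t p a b v Ha La Hb Lb Hpq.
  - injection Ha as <-. destruct p as [|j p]; [congruence|].
    rewrite subt_leaf in Hb; [discriminate|exact La].
  - destruct t as [x|f args]; [discriminate|]. simpl in Ha.
    destruct (nth_error args i) as [c|] eqn:Hc; [|discriminate].
    destruct p as [|j p].
    + injection Hb as <-. simpl in Lb. subst args. destruct i; discriminate.
    + cbn [subt replace] in Hb |- *. rewrite Hc. cbn [app].
      destruct (PeanoNat.Nat.eq_dec j i) as [->|Hji].
      * rewrite (nth_error_splice_eq _ _ _ _ Hc). rewrite Hc in Hb.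
        eapply IH; eauto. congruence.
      * rewrite (nth_error_splice_neq _ _ _ _ _ Hc Hji). exact Hb.
Qed.

Lemma vars_replace_keep (t : term) p u v z :
  subt t p = Some u -> In z (vars t) -> ~ In z (vars u) -> In z (vars (replace t p v)).
Proof.
  revert t; induction p as [|i p IH]; intros [x|f args] Hu H Hz; cbn [subt replace] in *;
    try discriminate; try (injection Hu as <-; contradiction).
  destruct (nth_error args i) as [a|] eqn:Ha; [|discriminate].
  rewrite <- (firstn_skipn_middle i args Ha) in H.
  cbn [vars app] in H |- *. rewrite flat_map_app, !in_app_iff in *. cbn [flat_map] in *.
  rewrite in_app_iff in *. destruct H as [H|[H|H]]; auto.
Qed.

Lemma replace_vars_ind (R : term -> Prop) (Q : position -> var L -> term -> Prop)
  (HQ : forall t p x u, R t -> subt t p = Some u -> leaf u -> Q p x u ->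
        R (replace t p (Var x))) :
  forall ps xs t, NoDup ps ->
  (forall p x, In (p, x) (combine ps xs) -> exists u, subt t p = Some u /\ leaf u /\ Q p x u) ->
  R t -> R (replace_vars t ps xs).
Proof.
  induction ps as [|p ps IH]; intros [|x xs] t Hnd Hpx HR; try exact HR.
  inversion Hnd as [|? ? Hp Hnd']; subst.
  destruct (Hpx p x (or_introl eq_refl)) as (u & Hu & Lu & Qu).
  apply (IH xs (replace t p (Var x)) Hnd'); [|eapply HQ; eauto].
  intros p' x' Hin. destruct (Hpx p' x' (or_intror Hin)) as (u' & Hu' & Lu' & Qu').
  exists u'. repeat split; auto. eapply subt_replace_leaves; eauto.
  intros ->. apply Hp. eapply in_combine_l; eauto.
Qed.

Lemma theory_term_App f (args : list term) :
  theory_term (App f args) <-> theory_sym f /\ Forall (@theory_term L) args.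
Proof.
  simpl. apply and_iff_compat_l.
  induction args as [|a args IH]; [split; constructor|].
  now rewrite Forall_cons_iff, <- IH.
Qed.

Lemma wf_App f (args : list term) :
  wf (App f args) <-> map (@sort_of L) args = arity f /\ Forall (@wf L) args.
Proof.
  simpl. apply and_iff_compat_l.
  induction args as [|a args IH]; [split; constructor|].
  now rewrite Forall_cons_iff, <- IH.
Qed.

Lemma value_carrier (v : fsym L) : value v -> carrier (res v) (interp v []).
Proof.
  intro Hv. destruct (value_const L v Hv) as [Hth _].
  apply val_onto; [apply (theory_sym_sorts L v Hth)|]. eauto.
Qed.

Lemma true_carrier : carrier bool_sort T.
Proof. destruct (true_value L) as [Hv <-]. exact (value_carrier _ Hv). Qed.

Definition value_of_sort (i : sort L) (a : term) : Prop :=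
  exists v, value v /\ res v = i /\ a = App v [].

Lemma value_of_sort_subst_ok g z :
  subst_ok g -> is_value (g z) -> value_of_sort (vsort z) (g z).
Proof.
  intros Hok [v [Hv Hgz]]. exists v. destruct (Hok z) as [_ Hs].
  rewrite Hgz in Hs |- *. auto.
Qed.

Lemma value_of_sort_wf i a : value_of_sort i a -> wf a /\ sort_of a = i.
Proof.
  intros [v (Hv & Hr & ->)]. simpl. destruct (value_const L v Hv) as [_ ->]. auto.
Qed.

Lemma eval_subst_carrier g (t : term) :
  subst_ok g -> theory_term t -> wf t -> (forall x, In x (vars t) -> is_value (g x)) ->
  carrier (sort_of t) (eval (subst g t)).
Proof.
  intro Hok.
  induction t as [x|f args IH] using term_nested_ind; intros Hth Hwf Hval.
  - simpl. destruct (value_of_sort_subst_ok g x Hok (Hval x (or_introl eq_refl)))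
      as [v (Hv & <- & Hgx)].
    rewrite Hgx. exact (value_carrier v Hv).
  - apply theory_term_App in Hth as [Hf Hargs]. apply wf_App in Hwf as [Hsorts Hwfs].
    simpl. apply interp_sorted; [exact Hf|]. rewrite <- Hsorts, map_map.
    assert (Hc : forall a, In a args -> carrier (sort_of a) (eval (subst g a))).
    { intros a Ha. rewrite Forall_forall in IH, Hargs, Hwfs.
      apply IH; auto. intros x Hx. apply Hval. simpl. apply in_flat_map. eauto. }
    clear - Hc. induction args as [|a args IHargs]; constructor.
    + apply Hc. left; reflexivity.
    + apply IHargs. intros b Hb. apply Hc. right; exact Hb.
Qed.

Lemma eval_cEq_values i (a b : term) :
  value_of_sort i a -> value_of_sort i b ->
  carrier bool_sort (eval (cEq i a b)) /\ (eval (cEq i a b) = T <-> a = b).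
Proof.
  intros [v (Hv & Hvi & ->)] [w (Hw & Hwi & ->)].
  assert (Hi : theory_sort i).
  { subst i. apply (theory_sym_sorts L v), value_const, Hv. }
  destruct (eq_sig L i Hi) as (Hth & Har & Hres).
  pose proof (value_carrier v Hv) as Cv. pose proof (value_carrier w Hw) as Cw.
  rewrite Hvi in Cv. rewrite Hwi in Cw.
  simpl. split.
  - rewrite <- Hres. apply interp_sorted; [exact Hth|]. rewrite Har. repeat constructor; auto.
  - rewrite (eq_spec L i _ _ Hi Cv Cw). split; intro E.
    + f_equal. apply val_inj; congruence.
    + injection E as ->. reflexivity.
Qed.

Lemma subst_cAnd g (a b : term) : subst g (cAnd a b) = cAnd (subst g a) (subst g b).
Proof. reflexivity. Qed.

Lemma subst_cEq g i (a b : term) : subst g (cEq i a b) = cEq i (subst g a) (subst g b).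
Proof. reflexivity. Qed.

Lemma subst_cBigAnd g (cs : list term) : subst g (cBigAnd cs) = cBigAnd (map (subst g) cs).
Proof. induction cs as [|c cs IH]; simpl; [reflexivity|]. now rewrite <- IH. Qed.

Lemma vars_cBigAnd (cs : list term) z :
  In z (vars (cBigAnd cs)) <-> exists c, In c cs /\ In z (vars c).
Proof.
  induction cs as [|c cs IH]; simpl.
  - split; [intros []|intros (c & [] & _)].
  - rewrite app_nil_r, in_app_iff, IH. split.
    + intros [Hz|(c' & Hc' & Hz)]; eauto.
    + intros (c' & [<-|Hc'] & Hz); eauto.
Qed.

Lemma eval_cAnd_carrier (a b : term) :
  carrier bool_sort (eval a) -> carrier bool_sort (eval b) ->
  carrier bool_sort (eval (cAnd a b)).
Proof.
  intros Ha Hb. destruct (and_sig L) as (Hth & Har & Hres). simpl. rewrite <- Hres.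
  apply interp_sorted; [exact Hth|]. rewrite Har. repeat constructor; auto.
Qed.

Lemma eval_cAnd_true (a b : term) :
  carrier bool_sort (eval a) -> carrier bool_sort (eval b) ->
  eval (cAnd a b) = T <-> eval a = T /\ eval b = T.
Proof. apply and_spec. Qed.

Lemma eval_cBigAnd_carrier (ds : list term) :
  Forall (fun d => carrier bool_sort (eval d)) ds -> carrier bool_sort (eval (cBigAnd ds)).
Proof.
  induction 1; [exact true_carrier|]. now apply eval_cAnd_carrier.
Qed.

Lemma eval_cBigAnd_true (ds : list term) :
  Forall (fun d => carrier bool_sort (eval d)) ds ->
  eval (cBigAnd ds) = T <-> Forall (fun d => eval d = T) ds.
Proof.
  induction 1 as [|d ds Hd Hds IH].
  - split; [constructor|reflexivity].
  - cbn [cBigAnd fold_right]. fold (cBigAnd ds).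
    rewrite eval_cAnd_true, IH, Forall_cons_iff; [reflexivity|exact Hd|].
    now apply eval_cBigAnd_carrier.
Qed.

Definition abstractable (phi u : term) : Prop :=
  is_value u \/ exists y, u = Var y /\ In y (vars phi).

Lemma abstractable_leaf phi u : abstractable phi u -> leaf u.
Proof. intros [[v [_ ->]]|[y [-> _]]]; reflexivity. Qed.

Lemma abstractable_vars phi u z : abstractable phi u -> In z (vars u) -> In z (vars phi).
Proof.
  intros [[v [_ ->]]|[y [-> Hy]]]; simpl; [intros []|intros [<-|[]]; exact Hy].
Qed.

Lemma abstractable_subst g phi u :
  subst_ok g -> (forall z, In z (vars phi) -> is_value (g z)) -> abstractable phi u ->
  value_of_sort (sort_of u) (subst g u).
Proof.
  intros Hok Hval [[v [Hv ->]]|[y [-> Hy]]].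
  - exists v. auto.
  - exact (value_of_sort_subst_ok g y Hok (Hval y Hy)).
Qed.

(* The [None] branch is junk: every [p_i] is a position of [l]. *)
Definition bind_cstr (l : term) (px : position * var L) : term :=
  cEq (vsort (snd px)) (Var (snd px))
      (match subt l (fst px) with Some u => u | None => Var (snd px) end).

Definition refl_cstr (y : var L) : term := cEq (vsort y) (Var y) (Var y).

Lemma eval_refl_cstr g y :
  subst_ok g -> is_value (g y) ->
  carrier bool_sort (eval (subst g (refl_cstr y))) /\ eval (subst g (refl_cstr y)) = T.
Proof.
  intros Hok Hy. unfold refl_cstr. rewrite subst_cEq.
  pose proof (value_of_sort_subst_ok g y Hok Hy) as Vy.
  destruct (eval_cEq_values _ _ _ Vy Vy) as [Hc Heq]. split; [exact Hc|]. apply Heq.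
  reflexivity.
Qed.

Definition abstract_cstr (l phi : term) (ps : list position) (xs ys : list (var L)) : term :=
  cAnd phi (cBigAnd (map (bind_cstr l) (combine ps xs) ++ map refl_cstr ys)).

Definition abstraction_consistent (l : term) (pxs : list (position * var L))
    (g : var L -> term) : Prop :=
  forall p x u, In (p, x) pxs -> subt l p = Some u -> g x = subst g u.

Section Abstraction.
Variables (l r phi : term) (ps : list position) (xs ys : list (var L)).
Hypothesis phi_theory : theory_term phi.
Hypothesis phi_wf : wf phi.
Hypothesis phi_bool : sort_of phi = bool_sort.
Hypothesis ps_nodup : NoDup ps.
Hypothesis xs_length : length xs = length ps.
Hypothesis xs_nodup : NoDup xs.
Hypothesis xs_fresh : forall x, In x xs ->
  ~ In x (vars l) /\ ~ In x (vars r) /\ ~ In x (vars phi).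
Hypothesis pairs_abstractable : forall p x, In (p, x) (combine ps xs) ->
  exists u, subt l p = Some u /\ vsort x = sort_of u /\ abstractable phi u.
Hypothesis ys_spec : forall y, In y ys <->
  In y (vars r) /\ ~ In y (vars l) /\ ~ In y (vars phi).

Local Notation pxs := (combine ps xs).
Local Notation l' := (replace_vars l ps xs).
Local Notation phi' := (abstract_cstr l phi ps xs ys).

Lemma notin_fresh z : In z (vars l) \/ In z (vars r) \/ In z (vars phi) -> ~ In z xs.
Proof. intros Hz Hx. destruct (xs_fresh z Hx) as (? & ? & ?). tauto. Qed.

Lemma in_xs_pair x : In x xs -> exists p, In (p, x) pxs.
Proof.
  intro Hx. rewrite <- (map_snd_combine ps xs xs_length), in_map_iff in Hx.
  destruct Hx as [[p x'] [Hx' Hpx]]. simpl in Hx'. subst x'. exists p. exact Hpx.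
Qed.

Lemma subst_abstract_lhs g : abstraction_consistent l pxs g -> subst g l' = subst g l.
Proof.
  intro Hcons.
  apply (replace_vars_ind (fun t => subst g t = subst g l) (fun _ x u => g x = subst g u));
    auto.
  - intros t p x u Ht Hu _ Hx. rewrite (subst_replace g t p u _ Hu). simpl.
    rewrite Hx, (replace_subt _ _ _ (subt_subst g t p u Hu)). exact Ht.
  - intros p x Hpx. destruct (pairs_abstractable p x Hpx) as (u & Hu & _ & Hab).
    exists u. repeat split; eauto using abstractable_leaf.
Qed.

Lemma vars_abstract_lhs_keep z : In z (vars l) -> ~ In z (vars phi) -> In z (vars l').
Proof.
  intros Hz Hnz.
  apply (replace_vars_ind (fun t => In z (vars t)) (fun _ _ u => ~ In z (vars u))); auto.
  - intros t p x u Ht Hu _ Hzu. exact (vars_replace_keep t p u _ z Hu Ht Hzu).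
  - intros p x Hpx. destruct (pairs_abstractable p x Hpx) as (u & Hu & _ & Hab).
    exists u. repeat split; eauto using abstractable_leaf, abstractable_vars.
Qed.

Lemma vars_abstract_cstr z : In z (vars phi') <-> In z (vars phi) \/ In z xs \/ In z ys.
Proof.
  unfold abstract_cstr, cAnd. cbn [vars flat_map].
  rewrite app_nil_r, in_app_iff, vars_cBigAnd.
  split.
  - intros [Hz|(c & Hc & Hz)]; [left; exact Hz|].
    apply in_app_iff in Hc as [Hc|Hc]; apply in_map_iff in Hc.
    + destruct Hc as [[p x] [<- Hpx]].
      destruct (pairs_abstractable p x Hpx) as (u & Hu & _ & Hab).
      unfold bind_cstr in Hz. cbn [fst snd] in Hz. rewrite Hu in Hz. simpl in Hz.
      rewrite app_nil_r in Hz.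
      destruct Hz as [<-|Hz]; [|left; exact (abstractable_vars phi u z Hab Hz)].
      right; left. exact (in_combine_r _ _ _ _ Hpx).
    + destruct Hc as [y [<- Hy]]. cbn in Hz. destruct Hz as [<-|[<-|[]]]; auto.
  - intros [Hz|[Hz|Hz]]; [left; exact Hz|right..].
    + destruct (in_xs_pair z Hz) as [p Hpx]. exists (bind_cstr l (p, z)).
      split; [apply in_app_iff; left; apply in_map; exact Hpx|left; reflexivity].
    + exists (refl_cstr z). split; [apply in_app_iff; right; apply in_map; exact Hz|].
      left; reflexivity.
Qed.

Lemma eval_bind_cstr g p x :
  subst_ok g -> (forall z, In z (vars phi) -> is_value (g z)) -> is_value (g x) ->
  In (p, x) pxs -> exists u, subt l p = Some u /\
    carrier bool_sort (eval (subst g (bind_cstr l (p, x)))) /\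
    (eval (subst g (bind_cstr l (p, x))) = T <-> g x = subst g u).
Proof.
  intros Hok Hval Hx Hpx. destruct (pairs_abstractable p x Hpx) as (u & Hu & Hsx & Hab).
  exists u. split; [exact Hu|].
  unfold bind_cstr. cbn [fst snd]. rewrite Hu, subst_cEq.
  apply eval_cEq_values; [exact (value_of_sort_subst_ok g x Hok Hx)|].
  rewrite Hsx. exact (abstractable_subst g phi u Hok Hval Hab).
Qed.

Lemma eval_abstract_cstr g :
  subst_ok g -> (forall z, In z (vars phi) \/ In z xs \/ In z ys -> is_value (g z)) ->
  eval (subst g phi') = T <-> eval (subst g phi) = T /\ abstraction_consistent l pxs g.
Proof.
  intros Hok Hval.
  assert (Hbind : forall p x, In (p, x) pxs -> exists u, subt l p = Some u /\
            carrier bool_sort (eval (subst g (bind_cstr l (p, x)))) /\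
            (eval (subst g (bind_cstr l (p, x))) = T <-> g x = subst g u)).
  { intros p x Hpx. apply eval_bind_cstr; auto.
    apply Hval. right; left. exact (in_combine_r _ _ _ _ Hpx). }
  assert (Hrefl : forall y, In y ys ->
            carrier bool_sort (eval (subst g (refl_cstr y))) /\
            eval (subst g (refl_cstr y)) = T)
    by (intros y Hy; apply eval_refl_cstr; auto).
  unfold abstract_cstr. rewrite subst_cAnd, subst_cBigAnd, map_app, !map_map.
  assert (Hcarriers : Forall (fun d => carrier bool_sort (eval d))
      (map (fun px => subst g (bind_cstr l px)) pxs ++
       map (fun y => subst g (refl_cstr y)) ys)).
  { rewrite Forall_app, !Forall_map, !Forall_forall. split.
    - intros [p x] Hpx. destruct (Hbind p x Hpx) as (u & _ & Hc & _). exact Hc.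
    - intros y Hy. apply Hrefl, Hy. }
  rewrite eval_cAnd_true, eval_cBigAnd_true by
    (auto using eval_cBigAnd_carrier; rewrite <- phi_bool; apply eval_subst_carrier; auto).
  apply and_iff_compat_l.
  rewrite Forall_app, !Forall_map, !Forall_forall. split.
  - intros [Hb _] p x u Hpx Hu. destruct (Hbind p x Hpx) as (u' & Hu' & _ & Heq).
    rewrite Hu in Hu'. injection Hu' as <-. apply Heq, Hb, Hpx.
  - intros Hcons. split.
    + intros [p x] Hpx. destruct (Hbind p x Hpx) as (u & Hu & _ & Heq).
      apply Heq, (Hcons p x u Hpx Hu).
    + intros y Hy. apply Hrefl, Hy.
Qed.

Lemma abstraction_extension g :
  subst_ok g -> (forall z, In z (vars phi) -> is_value (g z)) ->
  exists g', subst_ok g' /\ abstraction_consistent l pxs g' /\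
    (forall x, In x xs -> is_value (g' x)) /\ (forall z, ~ In z xs -> g' z = g z).
Proof.
  intros Hok Hval.
  destruct (exists_override g
              (fun p x => subst g (match subt l p with Some u => u | None => Var x end)) pxs)
    as (g' & Hpair & Hout); [rewrite map_snd_combine; auto|].
  rewrite map_snd_combine in Hout by exact xs_length.
  assert (Hpair_val : forall p x, In (p, x) pxs -> value_of_sort (vsort x) (g' x)).
  { intros p x Hpx. destruct (pairs_abstractable p x Hpx) as (u & Hu & Hsx & Hab).
    rewrite (Hpair p x Hpx), Hu, Hsx. exact (abstractable_subst g phi u Hok Hval Hab). }
  exists g'. split; [|split; [|split]].
  - intro z. destruct (classic (In z xs)) as [Hz|Hz].
    + destruct (in_xs_pair z Hz) as [p Hpx]. exact (value_of_sort_wf _ _ (Hpair_val p z Hpx)).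
    + rewrite (Hout z Hz). apply Hok.
  - intros p x u Hpx Hu. rewrite (Hpair p x Hpx), Hu. apply subst_ext. intros z Hz.
    symmetry. apply Hout, notin_fresh. right; right.
    destruct (pairs_abstractable p x Hpx) as (u' & Hu' & _ & Hab).
    rewrite Hu in Hu'. injection Hu' as <-. exact (abstractable_vars phi u z Hab Hz).
  - intros x Hx. destruct (in_xs_pair x Hx) as [p Hpx].
    destruct (Hpair_val p x Hpx) as [v (Hv & _ & Hgx)]. exists v. auto.
  - exact Hout.
Qed.

Lemma step_abstract s t : step (mkRule l r phi) s t -> step (mkRule l' r phi') s t.
Proof.
  intros (p & g & Hok & [Hlog Heval] & Hs & Ht).
  unfold logical_var in Hlog. cbn [lhs rhs cstr] in *.
  destruct (abstraction_extension g Hok) as (g' & Hok' & Hcons & Hxs & Hout);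
    [intros z Hz; apply Hlog; left; exact Hz|].
  assert (Hsame : forall u, (forall z, In z (vars u) -> ~ In z xs) -> subst g' u = subst g u)
    by (intros u Hu; apply subst_ext; auto).
  assert (Hval' : forall z, In z (vars phi) \/ In z xs \/ In z ys -> is_value (g' z)).
  { intros z [Hz|[Hz|Hz]].
    - rewrite Hout by (apply notin_fresh; auto). apply Hlog. left. exact Hz.
    - apply Hxs, Hz.
    - apply ys_spec in Hz as (Hr & Hnl & _).
      rewrite Hout by (apply notin_fresh; auto). apply Hlog. right. auto. }
  exists p, g'. split; [exact Hok'|]. unfold logical_var. cbn [lhs rhs cstr].
  split; [split|split].
  - intros z [Hz|[Hz Hnz]].
    + apply Hval', vars_abstract_cstr, Hz.
    + rewrite Hout by (apply notin_fresh; auto). apply Hlog.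
      destruct (classic (In z (vars phi))) as [Hphi|Hphi]; [left; exact Hphi|].
      right. split; [exact Hz|]. intro Hl. exact (Hnz (vars_abstract_lhs_keep z Hl Hphi)).
  - apply eval_abstract_cstr; [exact Hok'|exact Hval'|].
    rewrite Hsame by auto using notin_fresh. auto.
  - rewrite subst_abstract_lhs, Hsame by auto using notin_fresh. exact Hs.
  - rewrite Hsame by auto using notin_fresh. exact Ht.
Qed.

Lemma step_concretize s t : step (mkRule l' r phi') s t -> step (mkRule l r phi) s t.
Proof.
  intros (p & g & Hok & [Hlog Heval] & Hs & Ht).
  unfold logical_var in Hlog. cbn [lhs rhs cstr] in *.
  assert (Hval : forall z, In z (vars phi) \/ In z xs \/ In z ys -> is_value (g z))
    by (intros z Hz; apply Hlog; left; apply vars_abstract_cstr, Hz).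
  apply eval_abstract_cstr in Heval as [Hphi Hcons]; [|exact Hok|exact Hval].
  exists p, g. split; [exact Hok|]. unfold logical_var. cbn [lhs rhs cstr].
  split; [split|split].
  - intros z [Hz|[Hz Hnz]]; [auto|].
    destruct (classic (In z (vars phi))); [auto|].
    apply Hval. right; right. apply ys_spec. auto.
  - exact Hphi.
  - rewrite <- subst_abstract_lhs by exact Hcons. exact Hs.
  - exact Ht.
Qed.

End Abstraction.
End LCTRS.

Theorem theorem1 (L : lctrs) (l r phi : term L)
  (ps : list (position)) (xs : list (var L)) (ys : list (var L)) :
  valid_rule (mkRule l r phi) ->
  (* p_1..p_n enumerate { p in Pos(l) | l|_p in Val \cup Var(phi) } *)
  NoDup ps ->
  (forall p, In p ps <->
     exists u, subt l p = Some u /\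
       (is_value u \/ exists x, u = Var x /\ In x (vars phi))) ->
  (* x_1..x_n pairwise distinct, fresh, of the sort of l|_{p_i} *)
  length xs = length ps ->
  NoDup xs ->
  (forall x, In x xs ->
     ~ In x (vars l) /\ ~ In x (vars r) /\ ~ In x (vars phi)) ->
  (forall p x, In (p, x) (combine ps xs) ->
     exists u, subt l p = Some u /\ vsort x = sort_of u) ->
  (* ys enumerates Var(r) \ Var(l, phi) *)
  NoDup ys ->
  (forall y, In y ys <->
     In y (vars r) /\ ~ In y (vars l) /\ ~ In y (vars phi)) ->
  let l' := replace_vars l ps xs in
  let phi' :=
    cAnd phi
      (cBigAnd
         (map (fun px => cEq (vsort (snd px)) (Var (snd px))
                  (match subt l (fst px) with Some u => u | None => Var (snd px) end))
              (combine ps xs)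
          ++ map (fun y => cEq (vsort y) (Var y) (Var y)) ys)) in
  forall s t : term L, wf s ->
    (step (mkRule l r phi) s t <-> step (mkRule l' r phi') s t).
Proof.
  intros Hvalid Hps Hps_spec Hlen Hxs Hfresh Hsorts _ Hys l' phi' s t _.
  destruct Hvalid as (_ & _ & _ & Hwf & Hth & Hbool & _).
  assert (Hpairs : forall p x, In (p, x) (combine ps xs) ->
            exists u, subt l p = Some u /\ vsort x = sort_of u /\ abstractable L phi u).
  { intros p x Hpx. destruct (Hsorts p x Hpx) as (u & Hu & Hsx).
    destruct (proj1 (Hps_spec p) (in_combine_l _ _ _ _ Hpx)) as (u' & Hu' & Hab).
    rewrite Hu in Hu'. injection Hu' as <-. eauto. }
  split; [apply step_abstract | apply step_concretize]; assumption.
Qed.
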